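(* Let $M,N\in\mathbb N$ and let $\mathcal Q\in\mathbb M_{\mathrm{TS}}$. Then for every T-junction $v\in\mathsf T(\mathcal Q)$ there is a unique element $Q_v\in\mathcal Q$ with $v\in\mathsf T(Q_v)$. Moreover, the sets $\mathsf T_{\mathrm h}(\mathcal Q)$ and $\mathsf T_{\mathrm v}(\mathcal Q)$ are disjoint and $\mathsf T_{\mathrm h}(\mathcal Q)\cup\mathsf T_{\mathrm v}(\mathcal Q)=\mathsf T(\mathcal Q)$.
   Context: Let $\mathcal Q_0=\{[m-1,m]\times[n-1,n]: m\in\{1,\dots,M\},\ n\in\{1,\dots,N\}\}$. For a rectangle $Q=[x,x+\tilde x]\times[y,y+\tilde y]$, $j\in\{1,2\}$ and $0<q<1$, define $\mathrm{bisect}_{j,q}(Q)=\{[x,x+q\tilde x]\times[y,y+\tilde y],\ [x+q\tilde x,x+\tilde x]\times[y,y+\tilde y]\}$ if $j=1$ and $\mathrm{bisect}_{j,q}(Q)=\{[x,x+\tilde x]\times[y,y+q\tilde y],\ [x,x+\tilde x]\times[y+q\tilde y,y+\tilde y]\}$ if $j=2$. The mesh class $\mathbb M_{\mathrm{TS}}$ is the smallest set of finite sets of closed rectangles such that $\mathcal Q_0\in\mathbb M_{\mathrm{TS}}$ and, whenever $\mathcal Q\in\mathbb M_{\mathrm{TS}}$, $Q\in\mathcal Q$, $j\in\{1,2\}$, $0<q<1$, also $(\mathcal Q\setminus\{Q\})\cup\mathrm{bisect}_{j,q}(Q)\in\mathbb M_{\mathrm{TS}}$. For $Q=[x,x+\tilde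 x]\times[y,y+\tilde y]$ define the vertex set $\mathsf V(Q)=\{x,x+\tilde x\}\times\{y,y+\tilde y\}$, the vertical sides $\mathrm{vsk}(Q)=\{x,x+\tilde x\}\times[y,y+\tilde y]$ and horizontal sides $\mathrm{hsk}(Q)=[x,x+\tilde x]\times\{y,y+\tilde y\}$. For a mesh $\mathcal Q$, $\mathsf V(\mathcal Q)=\bigcup_{Q\in\mathcal Q}\mathsf V(Q)$; for $Q\in\mathcal Q$, $\mathsf T(Q)=(\mathsf V(\mathcal Q)\cap Q)\setminus\mathsf V(Q)$ and $\mathsf T(\mathcal Q)=\bigcup_{Q\in\mathcal Q}\mathsf T(Q)$ (T-junctions). Further $\mathsf T_{\mathrm h}(Q)=\{v\in\mathsf T(Q): v\in\mathrm{vsk}(Q)\}$, $\mathsf T_{\mathrm v}(Q)=\{v\in\mathsf T(Q): v\in\mathrm{hsk}(Q)\}$, $\mathsf T_{\mathrm h}(\mathcal Q)=\bigcup_{Q\in\mathcal Q}\mathsf T_{\mathrm h}(Q)$, $\mathsf T_{\mathrm v}(\mathcal Q)=\bigcup_{Q\in\mathcal Q}\mathsf T_{\mathrm v}(Q)$. *)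

From Stdlib Require Import Reals.
Open Scope R_scope.

(* A rectangle [x, x + w] x [y, y + h], stored by (x, y, w, h). *)
Record rect := mkRect { rx : R; ry : R; rw : R; rh : R }.

Definition point := (R * R)%type.

(* A mesh: a set of rectangles (finiteness is automatic for M_TS). *)
Definition mesh := rect -> Prop.

Definition in_rect (Q : rect) (v : point) : Prop :=
  rx Q <= fst v <= rx Q + rw Q /\ ry Q <= snd v <= ry Q + rh Q.

Definition Q0 (M N : nat) : mesh := fun Q =>
  exists m n : nat, (1 <= m <= M)%nat /\ (1 <= n <= N)%nat /\
    Q = mkRect (INR m - 1) (INR n - 1) 1 1.

(* bisect_{j,q}(Q), j = true means j = 1 (vertical cut), false means j = 2 *)
Definition bisect (j : bool) (q : R) (Q : rect) : mesh := fun Q' =>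
  if j then
    Q' = mkRect (rx Q) (ry Q) (q * rw Q) (rh Q) \/
    Q' = mkRect (rx Q + q * rw Q) (ry Q) (rw Q - q * rw Q) (rh Q)
  else
    Q' = mkRect (rx Q) (ry Q) (rw Q) (q * rh Q) \/
    Q' = mkRect (rx Q) (ry Q + q * rh Q) (rw Q) (rh Q - q * rh Q).

Definition refine (Qs : mesh) (Q : rect) (j : bool) (q : R) : mesh :=
  fun Q' => (Qs Q' /\ Q' <> Q) \/ bisect j q Q Q'.

Inductive MTS (M N : nat) : mesh -> Prop :=
  | MTS_init : MTS M N (Q0 M N)
  | MTS_step : forall (Qs : mesh) (Q : rect) (j : bool) (q : R),
      MTS M N Qs -> Qs Q -> 0 < q < 1 -> MTS M N (refine Qs Q j q).

Definition Vrect (Q : rect) (v : point) : Prop :=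
  (fst v = rx Q \/ fst v = rx Q + rw Q) /\ (snd v = ry Q \/ snd v = ry Q + rh Q).

Definition vsk (Q : rect) (v : point) : Prop :=
  (fst v = rx Q \/ fst v = rx Q + rw Q) /\ ry Q <= snd v <= ry Q + rh Q.
Definition hsk (Q : rect) (v : point) : Prop :=
  rx Q <= fst v <= rx Q + rw Q /\ (snd v = ry Q \/ snd v = ry Q + rh Q).

Definition Vmesh (Qs : mesh) (v : point) : Prop := exists Q, Qs Q /\ Vrect Q v.

Definition Trect (Qs : mesh) (Q : rect) (v : point) : Prop :=
  Vmesh Qs v /\ in_rect Q v /\ ~ Vrect Q v.
Definition Tmesh (Qs : mesh) (v : point) : Prop :=
  exists Q, Qs Q /\ Trect Qs Q v.

Definition Th_rect (Qs : mesh) (Q : rect) (v : point) : Prop :=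
  Trect Qs Q v /\ vsk Q v.
Definition Tv_rect (Qs : mesh) (Q : rect) (v : point) : Prop :=
  Trect Qs Q v /\ hsk Q v.
Definition Th_mesh (Qs : mesh) (v : point) : Prop :=
  exists Q, Qs Q /\ Th_rect Qs Q v.
Definition Tv_mesh (Qs : mesh) (v : point) : Prop :=
  exists Q, Qs Q /\ Tv_rect Qs Q v.

(* Every mesh of M_TS consists of nondegenerate rectangles with pairwise
   disjoint interiors.  Hence, for a point v and one of its four closed
   quadrant directions, at most one rectangle of the mesh covers v from that
   direction.  A vertex v of a rectangle Q3 is covered by Q3 from one
   direction (a, b); a T-junction v of Q lies in the relative interior of a
   side of Q, so Q covers v from a whole half-plane, which cannot contain
   (a, b) because Q <> Q3.  Two half-planes avoiding the same quadrant share a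
   quadrant, so two rectangles having v as T-junction coincide.  Likewise a
   rectangle having v on a vertical side and one having v on a horizontal side
   share a quadrant, hence coincide, and then v would be a vertex. *)

From Stdlib Require Import Reals Lra Classical.
Open Scope R_scope.

Definition rect_apart (Q1 Q2 : rect) : Prop :=
  rx Q1 + rw Q1 <= rx Q2 \/ rx Q2 + rw Q2 <= rx Q1 \/
  ry Q1 + rh Q1 <= ry Q2 \/ ry Q2 + rh Q2 <= ry Q1.

Definition subrect (P Q : rect) : Prop :=
  rx Q <= rx P /\ rx P + rw P <= rx Q + rw Q /\
  ry Q <= ry P /\ ry P + rh P <= ry Q + rh Q.

Definition nondegenerate (Q : rect) : Prop := 0 < rw Q /\ 0 < rh Q.

Record wf_mesh (Qs : mesh) : Prop := {
  wf_nondegenerate : forall Q, Qs Q -> nondegenerate Q;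
  wf_apart : forall Q1 Q2, Qs Q1 -> Qs Q2 -> Q1 <> Q2 -> rect_apart Q1 Q2 }.

Ltac solve_apart := unfold rect_apart; simpl;
  first [left; lra | right; left; lra | right; right; left; lra
        | right; right; right; lra].

Lemma bisect_nondegenerate_subrect j q Q P :
  0 < q < 1 -> nondegenerate Q -> bisect j q Q P -> nondegenerate P /\ subrect P Q.
Proof.
  intros Hq [Hw Hh] HP; unfold nondegenerate, subrect.
  destruct j, HP; subst; simpl; repeat split; nra.
Qed.

Lemma rect_apart_sym Q1 Q2 : rect_apart Q1 Q2 -> rect_apart Q2 Q1.
Proof. unfold rect_apart; tauto. Qed.

Lemma rect_apart_subrect P Q R : rect_apart Q R -> subrect P Q -> rect_apart P R.
Proof.
  intros HQR (? & ? & ? & ?).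
  destruct HQR as [?|[?|[?|?]]]; solve_apart.
Qed.

Lemma bisect_apart j q Q P1 P2 :
  bisect j q Q P1 -> bisect j q Q P2 -> P1 <> P2 -> rect_apart P1 P2.
Proof.
  intros H1 H2 Hne; destruct j, H1, H2; subst; try congruence; solve_apart.
Qed.

Lemma unit_squares_apart (m n m' n' : nat) :
  (m, n) <> (m', n') ->
  rect_apart (mkRect (INR m - 1) (INR n - 1) 1 1) (mkRect (INR m' - 1) (INR n' - 1) 1 1).
Proof.
  intros Hne.
  assert (Hsucc : forall k k' : nat, (k < k')%nat -> INR k + 1 <= INR k').
  { intros k k' Hk; rewrite <- S_INR; apply le_INR; exact Hk. }
  destruct (Nat.lt_total m m') as [Hm|[<-|Hm]]; [apply Hsucc in Hm; solve_apart| |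
    apply Hsucc in Hm; solve_apart].
  destruct (Nat.lt_total n n') as [Hn|[<-|Hn]]; [apply Hsucc in Hn; solve_apart
    | congruence | apply Hsucc in Hn; solve_apart].
Qed.

Lemma Q0_wf M N : wf_mesh (Q0 M N).
Proof.
  split.
  - intros Q (m & n & _ & _ & ->); split; simpl; lra.
  - intros Q1 Q2 (m & n & _ & _ & ->) (m' & n' & _ & _ & ->) Hne.
    apply unit_squares_apart; congruence.
Qed.

Lemma refine_wf Qs Q j q :
  wf_mesh Qs -> Qs Q -> 0 < q < 1 -> wf_mesh (refine Qs Q j q).
Proof.
  intros [Hnd Hap] HQ Hq.
  pose proof (fun P => bisect_nondegenerate_subrect j q Q P Hq (Hnd Q HQ)) as Hbis.
  split.
  - intros P [[HP _]|HP]; [auto | apply Hbis, HP].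
  - intros P1 P2 [[HP1 Hne1]|HP1] [[HP2 Hne2]|HP2] Hne.
    + auto.
    + apply rect_apart_sym, (rect_apart_subrect P2 Q); [auto | apply Hbis, HP2].
    + apply (rect_apart_subrect P1 Q); [auto | apply Hbis, HP1].
    + eapply bisect_apart; eauto.
Qed.

Lemma MTS_wf M N Qs : MTS M N Qs -> wf_mesh Qs.
Proof.
  induction 1; [apply Q0_wf | apply refine_wf; auto].
Qed.

(* [covers Q v a b]: Q contains the points just to the right (a = true) or
   left (a = false) of v and just above (b = true) or below (b = false) it. *)
Definition covers (Q : rect) (v : point) (a b : bool) : Prop :=
  (if a then rx Q <= fst v < rx Q + rw Q else rx Q < fst v <= rx Q + rw Q) /\
  (if b then ry Q <= snd v < ry Q + rh Q else ry Q < snd v <= ry Q + rh Q).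

Definition covers_halfplane (Q : rect) (v : point) : Prop :=
  exists s, (forall a, covers Q v a s) \/ (forall b, covers Q v s b).

Lemma covers_apart Q1 Q2 v a b :
  rect_apart Q1 Q2 -> covers Q1 v a b -> covers Q2 v a b -> False.
Proof. unfold covers, rect_apart; destruct a, b; lra. Qed.

Lemma covers_unique Qs Q1 Q2 v a b : wf_mesh Qs -> Qs Q1 -> Qs Q2 ->
  covers Q1 v a b -> covers Q2 v a b -> Q1 = Q2.
Proof.
  intros Hwf H1 H2 C1 C2.
  apply NNPP; intro Hne.
  exact (covers_apart Q1 Q2 v a b (wf_apart Qs Hwf Q1 Q2 H1 H2 Hne) C1 C2).
Qed.

Lemma vertex_covers Q v : nondegenerate Q -> Vrect Q v -> exists a b, covers Q v a b.
Proof.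
  intros [Hw Hh] [[Hx|Hx] [Hy|Hy]];
  [exists true, true | exists true, false | exists false, true | exists false, false];
  unfold covers; lra.
Qed.

Lemma interior_covers Q v a b :
  in_rect Q v -> ~ vsk Q v -> ~ hsk Q v -> covers Q v a b.
Proof.
  intros [Hx Hy] Hv Hh.
  assert (Hx0 : fst v <> rx Q) by (intro E; apply Hv; split; auto).
  assert (Hx1 : fst v <> rx Q + rw Q) by (intro E; apply Hv; split; auto).
  assert (Hy0 : snd v <> ry Q) by (intro E; apply Hh; split; auto).
  assert (Hy1 : snd v <> ry Q + rh Q) by (intro E; apply Hh; split; auto).
  destruct (Rdichotomy _ _ Hx0), (Rdichotomy _ _ Hx1),
    (Rdichotomy _ _ Hy0), (Rdichotomy _ _ Hy1);
  unfold covers; destruct a, b; lra.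
Qed.

Lemma vsk_covers Q v : nondegenerate Q -> vsk Q v -> ~ Vrect Q v ->
  exists a, forall b, covers Q v a b.
Proof.
  intros [Hw Hh] [Hx Hy] Hn.
  assert (Hy0 : snd v <> ry Q) by (intro E; apply Hn; split; auto).
  assert (Hy1 : snd v <> ry Q + rh Q) by (intro E; apply Hn; split; auto).
  destruct (Rdichotomy _ _ Hy0), (Rdichotomy _ _ Hy1); try lra.
  destruct Hx; [exists true | exists false]; intros []; unfold covers; lra.
Qed.

Lemma hsk_covers Q v : nondegenerate Q -> hsk Q v -> ~ Vrect Q v ->
  exists b, forall a, covers Q v a b.
Proof.
  intros [Hw Hh] [Hx Hy] Hn.
  assert (Hx0 : fst v <> rx Q) by (intro E; apply Hn; split; auto).
  assert (Hx1 : fst v <> rx Q + rw Q) by (intro E; apply Hn; split; auto).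
  destruct (Rdichotomy _ _ Hx0), (Rdichotomy _ _ Hx1); try lra.
  destruct Hy; [exists true | exists false]; intros []; unfold covers; lra.
Qed.

Lemma halfplanes_share_quadrant (C1 C2 : bool -> bool -> Prop) a b s1 s2 :
  ~ C1 a b -> ~ C2 a b ->
  (forall x, C1 x s1) \/ (forall y, C1 s1 y) ->
  (forall x, C2 x s2) \/ (forall y, C2 s2 y) ->
  exists x y, C1 x y /\ C2 x y.
Proof.
  intros N1 N2 [H1|H1] [H2|H2]; destruct a, b, s1, s2;
  first [ solve [exfalso; auto]
        | solve [exists true, true; auto] | solve [exists true, false; auto]
        | solve [exists false, true; auto] | solve [exists false, false; auto] ].
Qed.

Section TJunctions.

Variable Qs : mesh.
Hypothesis Hwf : wf_mesh Qs.

Lemma Trect_on_sides Q v : Qs Q -> Trect Qs Q v -> vsk Q v \/ hsk Q v.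
Proof.
  intros HQ ((Q3 & H3 & V3) & Hin & Hn).
  apply NNPP; intros Hside.
  destruct (vertex_covers Q3 v (wf_nondegenerate Qs Hwf Q3 H3) V3) as (a & b & C3).
  assert (C : covers Q v a b) by (apply interior_covers; tauto).
  rewrite <- (covers_unique Qs Q3 Q v a b Hwf H3 HQ C3 C) in Hn; auto.
Qed.

Lemma Trect_covers_halfplane Q v : Qs Q -> Trect Qs Q v -> covers_halfplane Q v.
Proof.
  intros HQ HT.
  pose proof (wf_nondegenerate Qs Hwf Q HQ) as Hnd.
  pose proof HT as (_ & _ & Hn).
  destruct (Trect_on_sides Q v HQ HT) as [Hs|Hs].
  - destruct (vsk_covers Q v Hnd Hs Hn) as [a Ha]; exists a; auto.
  - destruct (hsk_covers Q v Hnd Hs Hn) as [b Hb]; exists b; auto.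
Qed.

Lemma Trect_unique Q1 Q2 v :
  Qs Q1 -> Qs Q2 -> Trect Qs Q1 v -> Trect Qs Q2 v -> Q1 = Q2.
Proof.
  intros H1 H2 T1 T2.
  pose proof T1 as ((Q3 & H3 & V3) & _ & _).
  destruct (vertex_covers Q3 v (wf_nondegenerate Qs Hwf Q3 H3) V3) as (a & b & C3).
  assert (Hmiss : forall Q, Qs Q -> Trect Qs Q v -> ~ covers Q v a b).
  { intros Q HQ (_ & _ & Hn) C.
    rewrite <- (covers_unique Qs Q3 Q v a b Hwf H3 HQ C3 C) in Hn; auto. }
  destruct (Trect_covers_halfplane Q1 v H1 T1) as [s1 S1].
  destruct (Trect_covers_halfplane Q2 v H2 T2) as [s2 S2].
  destruct (halfplanes_share_quadrant (covers Q1 v) (covers Q2 v) a b s1 s2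
              (Hmiss Q1 H1 T1) (Hmiss Q2 H2 T2) S1 S2) as (x & y & C1 & C2).
  exact (covers_unique Qs Q1 Q2 v x y Hwf H1 H2 C1 C2).
Qed.

Lemma vsk_hsk_Vrect Q v : vsk Q v -> hsk Q v -> Vrect Q v.
Proof. intros [Hx _] [_ Hy]; split; auto. Qed.

Lemma Th_Tv_disjoint v : ~ (Th_mesh Qs v /\ Tv_mesh Qs v).
Proof.
  intros [(Q1 & H1 & (_ & _ & Hn1) & S1) (Q2 & H2 & (_ & _ & Hn2) & S2)].
  destruct (vsk_covers Q1 v (wf_nondegenerate Qs Hwf Q1 H1) S1 Hn1) as [a Ha].
  destruct (hsk_covers Q2 v (wf_nondegenerate Qs Hwf Q2 H2) S2 Hn2) as [b Hb].
  rewrite <- (covers_unique Qs Q1 Q2 v a b Hwf H1 H2 (Ha b) (Hb a)) in S2.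
  exact (Hn1 (vsk_hsk_Vrect Q1 v S1 S2)).
Qed.

Lemma Th_or_Tv v : Th_mesh Qs v \/ Tv_mesh Qs v <-> Tmesh Qs v.
Proof.
  split.
  - intros [(Q & HQ & HT & _)|(Q & HQ & HT & _)]; exists Q; auto.
  - intros (Q & HQ & HT).
    destruct (Trect_on_sides Q v HQ HT); [left|right]; exists Q; unfold Th_rect, Tv_rect; auto.
Qed.

End TJunctions.

Theorem mainTheorem1 (M N : nat) (Qs : mesh) (HQ : MTS M N Qs) :
  (forall v : point, Tmesh Qs v ->
     exists! Qv : rect, Qs Qv /\ Trect Qs Qv v) /\
  (forall v : point, ~ (Th_mesh Qs v /\ Tv_mesh Qs v)) /\
  (forall v : point, Th_mesh Qs v \/ Tv_mesh Qs v <-> Tmesh Qs v).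
Proof.
  pose proof (MTS_wf M N Qs HQ) as Hwf.
  split; [|split].
  - intros v (Q & HQv & HT); exists Q; split; [auto|].
    intros Q' [HQ' HT']; exact (Trect_unique Qs Hwf Q Q' v HQv HQ' HT HT').
  - exact (Th_Tv_disjoint Qs Hwf).
  - exact (Th_or_Tv Qs Hwf).
Qed.
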